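(* Let $P$ be the Borel probability measure on $\mathbb{R}$ with density $f(x)=\frac32$ if $x\in J_1:=[0,\frac13]$, $f(x)=\frac94$ if $x\in J_2\cup J_3$ where $J_2:=[\frac23,\frac79]$ and $J_3:=[\frac89,1]$, and $f(x)=0$ otherwise. Let $\alpha=\{a_1,a_2,a_3,a_4\}$ be an optimal set of four-means for $P$ with $a_1<a_2<a_3<a_4$. Then $a_1=\frac1{12}$, $a_2=\frac14$, $a_3=\frac{13}{18}$, $a_4=\frac{17}{18}$, and the corresponding quantization error is $V_4=\frac{13}{7776}$.
   Context: For $n\in\mathbb{N}$, the $n$th quantization error of $P$ is $V_n=\inf\{\int\min_{a\in\alpha}(x-a)^2\,dP(x):\alpha\subset\mathbb{R},\ \mathrm{card}(\alpha)\le n\}$, and an optimal set of $n$-means is a set $\alpha$ with $\mathrm{card}(\alpha)\le n$ attaining this infimum. *)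

From HB Require Import structures.
From mathcomp Require Import all_boot all_order all_algebra finmap.
From mathcomp Require Import all_classical all_reals all_analysis.
Set Implicit Arguments. Unset Strict Implicit. Unset Printing Implicit Defensive.
Import Order.TTheory GRing.Theory Num.Theory.
Local Open Scope classical_set_scope.
Local Open Scope ring_scope.
Local Open Scope fset_scope.

Definition dens (R : realType) (x : R) : R :=
  if (0 <= x <= 3^-1) then 3 / 2
  else if (2 / 3 <= x <= 7 / 9) || (8 / 9 <= x <= 1) then 9 / 4
  else 0.

Definition mindist (R : realType) (alpha : {fset R}) (x : R) : \bar R :=
  \big[Order.min/+oo%E]_(a <- alpha) ((x - a) ^+ 2)%:E.

Definition distortion (R : realType) (alpha : {fset R}) : \bar R :=
  (\int[@lebesgue_measure R]_(x in [set: R]) ((dens x)%:E * mindist alpha x))%E.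

Definition quant_err (R : realType) (n : nat) : \bar R :=
  ereal_inf [set distortion alpha | alpha in [set alpha : {fset R} | (#|` alpha| <= n)%N]].

Definition optimal_set (R : realType) (n : nat) (alpha : {fset R}) : Prop :=
  (#|` alpha| <= n)%N /\ distortion alpha = quant_err R n.

(* On each of J1 = [0,1/3], J2 = [2/3,7/9], J3 = [8/9,1] the density is
   constant, so the distortion of {a1,...,a4} is a weighted sum of the integrals
   of min_i (x - a_i)^2 over the three intervals, and each of them is a sum of
   cubic polynomials once the Voronoi cells are known.  Unless
   a1 < a2 <= 1/2 < a3 < 5/6 < a4, either J1 is served by a single point or some
   interval has no point within 1/18 of it, and a crude bound already exceeds
   13/7776.  Otherwise, after moving each point into its interval, the cost of
   J1 is at least 1/1296, with equality only for the points 1/12 and 1/4 (a sum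
   of cubes lies above its tangents), and the costs of J2 and J3 are at least
   1/8748, with equality only at their midpoints; the total
   3/2 * 1/1296 + 9/4 * 1/8748 + 9/4 * 1/8748 = 13/7776 is attained by
   {1/12, 1/4, 13/18, 17/18}. *)

From HB Require Import structures.
From mathcomp Require Import all_boot all_order all_algebra finmap.
From mathcomp Require Import all_classical all_reals all_analysis.
From mathcomp Require Import measurable_realfun lra ring zify.
Import Order.TTheory GRing.Theory Num.Theory.
Import numFieldNormedType.Exports.
Set Implicit Arguments.
Unset Strict Implicit.
Unset Printing Implicit Defensive.
Local Open Scope classical_set_scope.
Local Open Scope ring_scope.

Section QuadraticIntegrals.
Variable R : realType.
Local Notation mu := (@lebesgue_measure R).

Definition itv_integral (u v : R) (g : R -> R) : \bar R :=
  (\int[mu]_(x in `[u, v]) (g x)%:E)%E.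

Definition sqr_moment (u v c : R) : R := ((v - c) ^+ 3 - (u - c) ^+ 3) / 3.

Lemma is_derive_sqr_moment (u c x : R) :
  is_derive x 1 (sqr_moment u ^~ c) ((x - c) ^+ 2).
Proof.
have dB : is_derive x (1 : R) (fun y : R => y - c) (1 - 0) by apply: is_deriveB.
apply: (is_derive_eq (is_deriveM (is_deriveB (is_deriveX 3 dB) (is_derive_cst _ _ _))
                                 (is_derive_cst (3^-1 : R) x 1))).
rewrite scaler0 add0r !subr0 scaler1 /GRing.scale /=.
by rewrite mulrA mulVf ?mul1r // pnatr_eq0.
Qed.

Lemma is_derive_sqr_sub (c x : R) : is_derive x 1 (fun y : R => (y - c) ^+ 2) (2 * (x - c)).
Proof.
have dB : is_derive x (1 : R) (fun y : R => y - c) (1 - 0) by apply: is_deriveB.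
by apply: (is_derive_eq (is_deriveX 2 dB)); rewrite /= subr0 /GRing.scale /= mulr1 expr1.
Qed.

Lemma continuous_of_is_derive (F f : R -> R) :
  (forall x, is_derive x (1 : R) F (f x)) -> continuous F.
Proof.
move=> dF x; apply/differentiable_continuous; rewrite -derivable1_diffP.
by case: (dF x).
Qed.

Lemma itv_integral_sqr_sub (u v c : R) : u <= v ->
  itv_integral u v (fun x => (x - c) ^+ 2) = (sqr_moment u v c)%:E.
Proof.
rewrite le_eqVlt => /predU1P[<-|uv].
  by rewrite /itv_integral set_itv1 integral_set1 /sqr_moment subrr mul0r.
have dM := is_derive_sqr_moment u c; have dS := is_derive_sqr_sub c.
rewrite /itv_integral (@continuous_FTC2 _ _ (sqr_moment u ^~ c)) //.
- by rewrite /sqr_moment subrr mul0r sube0.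
- by apply/continuous_subspaceT => x; exact: continuous_of_is_derive dS x.
- split; first by move=> x _; case: (dM x).
  + by apply: cvg_at_right_filter; exact: continuous_of_is_derive dM u.
  + by apply: cvg_at_left_filter; exact: continuous_of_is_derive dM v.
- by move=> x _; rewrite derive1E derive_val.
Qed.

Section NonnegIntegrand.
Variable g : R -> R.
Hypotheses (mg : measurable_fun setT g) (g_ge0 : forall x, 0 <= g x).

Lemma itv_integral_ge0 (u v : R) : (0 <= itv_integral u v g)%E.
Proof. by apply: integral_ge0 => x _; rewrite lee_fin. Qed.

Lemma itv_integral_split (u w v : R) : u <= w -> w <= v ->
  itv_integral u v g = (itv_integral u w g + itv_integral w v g)%E.
Proof.
move=> uw wv; have mG : measurable_fun setT (EFin \o g) by exact: measurableT_comp.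
rewrite /itv_integral (@itv_bndbnd_setU _ _ _ (BRight w)) ?bnd_simp //.
rewrite ge0_integral_setU //=.
- by rewrite integral_itv_obnd_cbnd //; exact: measurable_funS mG.
- exact: measurable_funS mG.
- by move=> x _; rewrite lee_fin.
- rewrite disj_set2E; apply/eqP/seteqP; split => // x [] /=.
  by rewrite !in_itv /= => /andP[_ xw] /andP[wx _]; move: (lt_le_trans wx xw); rewrite ltxx.
Qed.

Lemma sqr_moment_le_itv_integral (u v c : R) : u <= v ->
  (forall x, u <= x <= v -> (x - c) ^+ 2 <= g x) ->
  ((sqr_moment u v c)%:E <= itv_integral u v g)%E.
Proof.
move=> uv le_g; rewrite -itv_integral_sqr_sub //.
apply: ge0_le_integral => //.
- by move=> x _; rewrite lee_fin sqr_ge0.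
- by apply: measurableT_comp => //; apply/measurable_funX/measurable_funB.
- by apply: (measurable_funS measurableT) => //; exact: measurableT_comp.
Qed.

Lemma itv_integral_le_sqr_moment (u v c : R) : u <= v ->
  (forall x, u <= x <= v -> g x <= (x - c) ^+ 2) ->
  (itv_integral u v g <= (sqr_moment u v c)%:E)%E.
Proof.
move=> uv g_le; rewrite -itv_integral_sqr_sub //.
apply: ge0_le_integral => //.
- by move=> x _; rewrite lee_fin.
- by apply: (measurable_funS measurableT) => //; exact: measurableT_comp.
- by apply: measurableT_comp => //; apply/measurable_funX/measurable_funB.
Qed.

Lemma sqr_moment_le_itv_integral_sub (U u v V c : R) : U <= u -> u <= v -> v <= V ->
  (forall x, u <= x <= v -> (x - c) ^+ 2 <= g x) ->
  ((sqr_moment u v c)%:E <= itv_integral U V g)%E.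
Proof.
move=> Uu uv vV le_g.
rewrite (itv_integral_split Uu (le_trans uv vV)) (itv_integral_split uv vV).
apply: le_trans (sqr_moment_le_itv_integral uv le_g) _.
by rewrite addeCA leeDl // adde_ge0 // itv_integral_ge0.
Qed.

Lemma sqr_moment2_le_itv_integral (u m v c d : R) : u <= m -> m <= v ->
  (forall x, u <= x <= m -> (x - c) ^+ 2 <= g x) ->
  (forall x, m <= x <= v -> (x - d) ^+ 2 <= g x) ->
  ((sqr_moment u m c + sqr_moment m v d)%:E <= itv_integral u v g)%E.
Proof.
move=> um mv le_c le_d; rewrite (itv_integral_split um mv) EFinD.
by apply: leeD; exact: sqr_moment_le_itv_integral.
Qed.

End NonnegIntegrand.
End QuadraticIntegrals.

Section NearestPoint.
Variable R : realFieldType.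
Implicit Types a c u v x : R.

Lemma sqr_sub_le_right a c x : a <= c -> a + c <= 2 * x -> (x - c) ^+ 2 <= (x - a) ^+ 2.
Proof.
move=> ac acx; rewrite -subr_ge0.
have -> : (x - a) ^+ 2 - (x - c) ^+ 2 = (c - a) * (2 * x - a - c) by ring.
by apply: mulr_ge0; lra.
Qed.

Lemma sqr_sub_le_left a c x : c <= a -> 2 * x <= a + c -> (x - c) ^+ 2 <= (x - a) ^+ 2.
Proof.
move=> ca acx; rewrite -subr_ge0.
have -> : (x - a) ^+ 2 - (x - c) ^+ 2 = (a - c) * (a + c - 2 * x) by ring.
by apply: mulr_ge0; lra.
Qed.

Definition clamp u v a := if a < u then u else if v < a then v else a.

Lemma clamp_itv u v a : u <= v -> u <= clamp u v a <= v.
Proof.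
by rewrite /clamp => uv; case: (ltrP a u) => ?; case: (ltrP v a) => ?; apply/andP; split; lra.
Qed.

Lemma le_clamp u v a b : u <= v -> a <= b -> clamp u v a <= clamp u v b.
Proof.
by rewrite /clamp => uv ab; case: (ltrP a u) => ?; case: (ltrP v a) => ?;
  case: (ltrP b u) => ?; case: (ltrP v b) => ?; lra.
Qed.

Lemma clamp_sqr_sub_le u v a x : u <= x <= v -> (x - clamp u v a) ^+ 2 <= (x - a) ^+ 2.
Proof.
move=> /andP[ux xv]; rewrite /clamp; case: (ltrP a u) => au.
  by apply: sqr_sub_le_right; lra.
by case: (ltrP v a) => va //; apply: sqr_sub_le_left; lra.
Qed.

Lemma clamp_eq_interior u v a t : u < t -> t < v -> clamp u v a = t -> a = t.
Proof. by rewrite /clamp => ut tv; case: (ltrP a u) => ?; case: (ltrP v a) => ?; lra. Qed.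

End NearestPoint.

Ltac nearer :=
  first [ exact: lexx | apply: sqr_sub_le_right; lra | apply: sqr_sub_le_left; lra ].

Section SharpLowerBound.
Variable R : realDomainType.
Local Open Scope ereal_scope.

(* I >= b, and I comes down to b only if P holds; the real witness F keeps
   the arithmetic out of the extended reals. *)
Definition sharp_lower_bound (b : R) (I : \bar R) (P : Prop) :=
  exists F : R, [/\ F%:E <= I, (b <= F)%R & (F <= b)%R -> P].

Lemma sharp_lower_bound_gt (b c : R) I P : (b < c)%R -> c%:E <= I ->
  sharp_lower_bound b I P.
Proof. by move=> bc cI; exists c; split => // [|cb]; [exact: ltW | lra]. Qed.

Lemma sharp_lower_boundW (b : R) I (P Q : Prop) : (P -> Q) ->
  sharp_lower_bound b I P -> sharp_lower_bound b I Q.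
Proof. by move=> PQ [F [FI bF FP]]; exists F; split => // /FP. Qed.

Lemma lee_pcomb3 (p q r : R) (x1 x2 x3 y1 y2 y3 : \bar R) :
  (0 <= p)%R -> (0 <= q)%R -> (0 <= r)%R -> x1 <= y1 -> x2 <= y2 -> x3 <= y3 ->
  p%:E * x1 + q%:E * x2 + r%:E * x3 <= p%:E * y1 + q%:E * y2 + r%:E * y3.
Proof.
move=> p0 q0 r0 xy1 xy2 xy3.
by apply: leeD; [apply: leeD|]; apply: lee_wpmul2l; rewrite ?lee_fin.
Qed.

Lemma sharp_lower_bound_pcomb3 (p q r b1 b2 b3 : R) I1 I2 I3 (P1 P2 P3 : Prop) :
  (0 < p)%R -> (0 < q)%R -> (0 < r)%R ->
  sharp_lower_bound b1 I1 P1 -> sharp_lower_bound b2 I2 P2 ->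
  sharp_lower_bound b3 I3 P3 ->
  sharp_lower_bound (p * b1 + q * b2 + r * b3) (p%:E * I1 + q%:E * I2 + r%:E * I3)
    [/\ P1, P2 & P3].
Proof.
move=> p0 q0 r0 [F1 [FI1 bF1 FP1]] [F2 [FI2 bF2 FP2]] [F3 [FI3 bF3 FP3]].
exists (p * F1 + q * F2 + r * F3)%R; split.
- by rewrite !EFinD !EFinM; apply: lee_pcomb3 => //; exact: ltW.
- by apply: lerD; [apply: lerD|]; rewrite ler_pM2l.
have d1 : (0 <= p * (F1 - b1))%R by apply: mulr_ge0; lra.
have d2 : (0 <= q * (F2 - b2))%R by apply: mulr_ge0; lra.
have d3 : (0 <= r * (F3 - b3))%R by apply: mulr_ge0; lra.
move=> Fb; split; [apply: FP1 | apply: FP2 | apply: FP3].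
- by rewrite -subr_le0 -(pmulr_rle0 _ p0); lra.
- by rewrite -subr_le0 -(pmulr_rle0 _ q0); lra.
- by rewrite -subr_le0 -(pmulr_rle0 _ r0); lra.
Qed.

End SharpLowerBound.

Section Density.
Variable R : realType.
Local Notation mu := (@lebesgue_measure R).
Implicit Types x : R.

Lemma dens_J1 x : 0 <= x <= 1/3 -> dens x = 3/2.
Proof. by rewrite /dens div1r => ->. Qed.

Lemma dens_J2 x : 2/3 <= x <= 7/9 -> dens x = 9/4.
Proof.
move=> J2x; rewrite /dens J2x ifF //.
by apply/negbTE; move: J2x; apply: contraL; lra.
Qed.

Lemma dens_J3 x : 8/9 <= x <= 1 -> dens x = 9/4.
Proof.
move=> J3x; rewrite /dens J3x orbT ifF //.
by apply/negbTE; move: J3x; apply: contraL; lra.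
Qed.

Lemma dens_ge0 x : 0 <= dens x.
Proof. by rewrite /dens; repeat case: ifP => _ //. Qed.

Lemma dens_out x : ~~ (0 <= x <= 1/3) -> ~~ (2/3 <= x <= 7/9) -> ~~ (8/9 <= x <= 1) ->
  dens x = 0.
Proof. by rewrite /dens div1r => /negbTE-> /negbTE-> /negbTE->. Qed.

Section DensityIntegral.
Variable g : R -> R.
Hypotheses (mg : measurable_fun setT g) (g_ge0 : forall x, 0 <= g x).

Lemma measurable_dens_mul_on (k : R) (D : set R) : (forall x, D x -> dens x = k) ->
  measurable_fun D (fun x => (dens x)%:E * (g x)%:E)%E.
Proof.
move=> Dk; apply: (@eq_measurable_fun _ _ _ _ D (fun x => k%:E * (g x)%:E)%E).
  by move=> x; rewrite inE => /Dk ->.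
by apply/measurable_funeM/measurableT_comp => //; exact: measurable_funS mg.
Qed.

Lemma integral_dens_mul_on (k u v : R) : 0 <= k ->
  (forall x, u <= x <= v -> dens x = k) ->
  (\int[mu]_(x in `[u, v]) ((dens x)%:E * (g x)%:E) = k%:E * itv_integral u v g)%E.
Proof.
move=> k0 Dk; rewrite /itv_integral -ge0_integralZl_EFin //.
- by apply: eq_integral => x; rewrite inE /= in_itv /= => /Dk ->.
- by move=> x _; rewrite lee_fin.
- by apply/measurableT_comp => //; exact: measurable_funS mg.
Qed.

Lemma integral_dens_mul :
  (\int[mu]_(x in [set: R]) ((dens x)%:E * (g x)%:E) =
   (3/2)%:E * itv_integral 0 (1/3) g + (9/4)%:E * itv_integral (2/3) (7/9) g
   + (9/4)%:E * itv_integral (8/9) 1 g)%E.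
Proof.
set h := (fun x => _ * _)%E.
pose J1 : set R := `[0, 1/3]%classic; pose J2 : set R := `[2/3, 7/9]%classic.
pose J3 : set R := `[8/9, 1]%classic.
have dJ1 x : J1 x -> dens x = 3/2 by rewrite /J1 /= in_itv; exact: dens_J1.
have dJ2 x : J2 x -> dens x = 9/4 by rewrite /J2 /= in_itv; exact: dens_J2.
have dJ3 x : J3 x -> dens x = 9/4 by rewrite /J3 /= in_itv; exact: dens_J3.
have mJ12 : measurable (J1 `|` J2) by apply: measurableU; exact: measurable_itv.
have disjJ12 : [disjoint J1 & J2].
  rewrite disj_set2E; apply/eqP/seteqP; split => // x [] /=.
  by rewrite /J1 /J2 /= !in_itv /= => /andP[_ ?] /andP[? _]; lra.
have disjJ123 : [disjoint J1 `|` J2 & J3].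
  rewrite disj_set2E; apply/eqP/seteqP; split => // x [] /=.
  by rewrite /J1 /J2 /J3 /= !in_itv /= => -[] /andP[_ ?] /andP[? _]; lra.
have supp : (\int[mu]_(x in [set: R]) h x = \int[mu]_(x in J1 `|` J2 `|` J3) h x)%E.
  rewrite [RHS]integral_mkcond; apply: eq_integral => x _; rewrite /patch.
  case: ifPn => // /negP J123x; rewrite /h dens_out ?mul0e //; apply/negP => Jx; apply: J123x.
  - by rewrite inE; left; left; rewrite /J1 /= in_itv.
  - by rewrite inE; left; right; rewrite /J2 /= in_itv.
  - by rewrite inE; right; rewrite /J3 /= in_itv.
have h_ge0 x : (0 <= h x)%E by rewrite mule_ge0 // lee_fin ?dens_ge0.
have mJ1 : measurable J1 by exact: measurable_itv.
have mJ2 : measurable J2 by exact: measurable_itv.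
have mJ3 : measurable J3 by exact: measurable_itv.
have mh12 : measurable_fun (J1 `|` J2) h.
  apply/(measurable_funU _ mJ1 mJ2).
  by split; [exact: measurable_dens_mul_on dJ1 | exact: measurable_dens_mul_on dJ2].
have mh123 : measurable_fun (J1 `|` J2 `|` J3) h.
  by apply/(measurable_funU _ mJ12 mJ3); split => //; exact: measurable_dens_mul_on dJ3.
rewrite supp ge0_integral_setU // ge0_integral_setU //.
rewrite /h !(integral_dens_mul_on _ dens_J1, integral_dens_mul_on _ dens_J2,
  integral_dens_mul_on _ dens_J3) //; lra.
Qed.

End DensityIntegral.
End Density.

Section FourPoints.
Variable R : realType.

Definition min4 (a1 a2 a3 a4 x : R) : R :=
  Num.min (Num.min (Num.min ((x - a1) ^+ 2) ((x - a2) ^+ 2)) ((x - a3) ^+ 2)) ((x - a4) ^+ 2).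

Lemma le_min4 (a1 a2 a3 a4 x m : R) :
  m <= (x - a1) ^+ 2 -> m <= (x - a2) ^+ 2 -> m <= (x - a3) ^+ 2 -> m <= (x - a4) ^+ 2 ->
  m <= min4 a1 a2 a3 a4 x.
Proof. by move=> h1 h2 h3 h4; rewrite /min4 !le_min h1 h2 h3 h4. Qed.

Lemma min4_ge0 (a1 a2 a3 a4 x : R) : 0 <= min4 a1 a2 a3 a4 x.
Proof. by apply: le_min4; exact: sqr_ge0. Qed.

Lemma measurable_min4 (a1 a2 a3 a4 : R) : measurable_fun setT (min4 a1 a2 a3 a4).
Proof.
have msq a : measurable_fun setT (fun x : R => (x - a) ^+ 2).
  exact/measurable_funX/measurable_funB.
by do 3 apply: measurable_minr => //.
Qed.

Lemma mindist_fset4 (a1 a2 a3 a4 x : R) :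
  mindist [fset a1; a2; a3; a4]%fset x = (min4 a1 a2 a3 a4 x)%:E.
Proof.
apply/le_anti/andP; split.
  rewrite /min4 !EFin_min !le_min.
  by rewrite !ge_bigmin_seq // !inE eqxx ?orbT.
rewrite /mindist big_seq; apply: le_bigmin => [|a]; first exact: leey.
by rewrite !inE -!orbA => /or4P[] /eqP->; rewrite lee_fin /min4 !ge_min lexx ?orbT.
Qed.

Lemma distortion_fset4 (a1 a2 a3 a4 : R) :
  distortion [fset a1; a2; a3; a4]%fset =
  ((3/2)%:E * itv_integral 0 (1/3) (min4 a1 a2 a3 a4)
   + (9/4)%:E * itv_integral (2/3) (7/9) (min4 a1 a2 a3 a4)
   + (9/4)%:E * itv_integral (8/9) 1 (min4 a1 a2 a3 a4))%E.
Proof.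
rewrite /distortion; under eq_integral => x _ do rewrite mindist_fset4.
exact: integral_dens_mul (measurable_min4 _ _ _ _) (min4_ge0 _ _ _ _).
Qed.

Lemma min4_ge_gap_left (a1 a2 a3 a4 s t x : R) :
  (forall a : R, a \in [:: a1; a2; a3; a4] -> a <= s \/ t <= a) ->
  s <= x -> 2 * x <= s + t -> (x - s) ^+ 2 <= min4 a1 a2 a3 a4 x.
Proof.
move=> gap sx xst.
have near a : a \in [:: a1; a2; a3; a4] -> (x - s) ^+ 2 <= (x - a) ^+ 2.
  by move=> /gap[] ?; [apply: sqr_sub_le_right | apply: sqr_sub_le_left]; lra.
by apply: le_min4; apply: near; rewrite !inE eqxx ?orbT.
Qed.

Lemma min4_ge_gap_right (a1 a2 a3 a4 s t x : R) :
  (forall a : R, a \in [:: a1; a2; a3; a4] -> a <= s \/ t <= a) ->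
  s + t <= 2 * x -> x <= t -> (x - t) ^+ 2 <= min4 a1 a2 a3 a4 x.
Proof.
move=> gap stx xt.
have near a : a \in [:: a1; a2; a3; a4] -> (x - t) ^+ 2 <= (x - a) ^+ 2.
  by move=> /gap[] ?; [apply: sqr_sub_le_right | apply: sqr_sub_le_left]; lra.
by apply: le_min4; apply: near; rewrite !inE eqxx ?orbT.
Qed.

Lemma sqr_moment_le_itv_integral_min4 (a1 a2 a3 a4 U u v V c : R) :
  U <= u -> u <= v -> v <= V ->
  (forall x, u <= x <= v -> (x - c) ^+ 2 <= min4 a1 a2 a3 a4 x) ->
  ((sqr_moment u v c)%:E <= itv_integral U V (min4 a1 a2 a3 a4))%E.
Proof.
move=> Uu uv vV.
exact: (sqr_moment_le_itv_integral_sub (measurable_min4 a1 a2 a3 a4) (min4_ge0 a1 a2 a3 a4)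
  Uu uv vV).
Qed.

End FourPoints.

Section CubeTangent.
Variable R : realFieldType.
Implicit Types a t : R.

Definition cube_tangent_gap a t := (t - a) ^+ 2 * (t + 2 * a).

Lemma cube_tangent_gapE a t :
  cube_tangent_gap a t = t ^+ 3 - (a ^+ 3 + 3 * a ^+ 2 * (t - a)).
Proof. by rewrite /cube_tangent_gap; ring. Qed.

Lemma cube_tangent_gap_ge0 a t : 0 <= a -> 0 <= t -> 0 <= cube_tangent_gap a t.
Proof. by move=> a0 t0; apply: mulr_ge0; [exact: sqr_ge0 | lra]. Qed.

Lemma cube_tangent_gap_le0 a t : 0 < a -> 0 <= t -> cube_tangent_gap a t <= 0 -> t = a.
Proof.
move=> a0 t0 gap_le0; have /eqP : cube_tangent_gap a t = 0.
  by apply/le_anti; rewrite gap_le0 cube_tangent_gap_ge0 //; exact: ltW.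
by rewrite mulf_eq0 sqrf_eq0 subr_eq0 => /orP[/eqP //|]; lra.
Qed.

End CubeTangent.

Section IntervalCosts.
Variable R : realType.
Variable g : R -> R.
Hypotheses (mg : measurable_fun setT g) (g_ge0 : forall x, 0 <= g x).

(* The fixed centres 1/2 and 5/6 stand in for the points of the quantizer
   lying beyond them. *)
Lemma sharp_lower_bound_J1 (c1 c2 : R) : 0 <= c1 -> c1 <= c2 -> c2 <= 1/3 ->
  (forall x, 0 <= x <= 1/3 ->
     Num.min (Num.min ((x - c1) ^+ 2) ((x - c2) ^+ 2)) ((x - 1/2) ^+ 2) <= g x) ->
  sharp_lower_bound (1/1296) (itv_integral 0 (1/3) g) (c1 = 1/12 /\ c2 = 1/4).
Proof.
move=> c1_ge0 c12 c2_le g_ge.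
have g_ge_sqr c x : 0 <= x <= 1/3 -> (x - c) ^+ 2 <= (x - c1) ^+ 2 ->
    (x - c) ^+ 2 <= (x - c2) ^+ 2 -> (x - c) ^+ 2 <= (x - 1/2) ^+ 2 -> (x - c) ^+ 2 <= g x.
  by move=> Jx h1 h2 h3; apply: le_trans (g_ge x Jx); rewrite !le_min h1 h2 h3.
case: (ltrP c2 (1/6)) => [c2_lt|c2_ge].
  apply: (@sharp_lower_bound_gt _ _ (sqr_moment (1/6) (1/3) (1/6))).
    by rewrite /sqr_moment subrr expr0n /=; lra.
  apply: sqr_moment_le_itv_integral_sub => //; try lra.
  by move=> x /andP[x1 x2]; apply: g_ge_sqr; [apply/andP; split; lra | nearer ..].
(* With x = c1, y = (c2 - c1) / 2, z = 1/3 - c2, so that x + 2 y + z = 1/3,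
   the cost is (x^3 + 2 y^3 + z^3) / 3, and each cube lies above its tangent
   at 1/12. *)
have cost2E : sqr_moment 0 ((c1 + c2) / 2) c1 + sqr_moment ((c1 + c2) / 2) (1/3) c2 =
    1/1296 + (cube_tangent_gap (1/12) c1 + 2 * cube_tangent_gap (1/12) ((c2 - c1) / 2)
              + cube_tangent_gap (1/12) (1/3 - c2)) / 3.
  by rewrite !cube_tangent_gapE /sqr_moment; field.
have gap1 : 0 <= cube_tangent_gap (1/12) c1 by apply: cube_tangent_gap_ge0; lra.
have gap2 : 0 <= cube_tangent_gap (1/12) ((c2 - c1) / 2) by apply: cube_tangent_gap_ge0; lra.
have gap3 : 0 <= cube_tangent_gap (1/12) (1/3 - c2) by apply: cube_tangent_gap_ge0; lra.
exists (sqr_moment 0 ((c1 + c2) / 2) c1 + sqr_moment ((c1 + c2) / 2) (1/3) c2); split.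
- apply: sqr_moment2_le_itv_integral => //; try lra.
  + by move=> x /andP[x1 x2]; apply: g_ge_sqr; [apply/andP; split; lra | nearer ..].
  + by move=> x /andP[x1 x2]; apply: g_ge_sqr; [apply/andP; split; lra | nearer ..].
- by rewrite cost2E; lra.
- rewrite cost2E => cost_le.
  have e1 : c1 = 1/12 by apply: (@cube_tangent_gap_le0 _ (1/12)); lra.
  have e3 : 1/3 - c2 = 1/12 by apply: (@cube_tangent_gap_le0 _ (1/12)); lra.
  by split; lra.
Qed.

Lemma sharp_lower_bound_J2 (c : R) : 2/3 <= c <= 7/9 ->
  (forall x, 2/3 <= x <= 7/9 -> Num.min ((x - c) ^+ 2) ((x - 5/6) ^+ 2) <= g x) ->
  sharp_lower_bound (1/8748) (itv_integral (2/3) (7/9) g) (c = 13/18).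
Proof.
move=> /andP[c_ge c_le] g_ge.
have g_ge_sqr d x : 2/3 <= x <= 7/9 -> (x - d) ^+ 2 <= (x - c) ^+ 2 ->
    (x - d) ^+ 2 <= (x - 5/6) ^+ 2 -> (x - d) ^+ 2 <= g x.
  by move=> Jx h1 h2; apply: le_trans (g_ge x Jx); rewrite le_min h1 h2.
case: (lerP (13/18) c) => [c_ge_mid|c_lt_mid].
  have cost1E : sqr_moment (2/3) (7/9) c = 1/8748 + (c - 13/18) ^+ 2 / 9.
    by rewrite /sqr_moment; field.
  exists (sqr_moment (2/3) (7/9) c); split.
  - apply: sqr_moment_le_itv_integral => //; first lra.
    by move=> x /andP[x1 x2]; apply: g_ge_sqr; [apply/andP; split; lra | nearer ..].
  - by rewrite cost1E; have := sqr_ge0 (c - 13/18); lra.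
  - rewrite cost1E => cost_le; apply/eqP; rewrite -subr_eq0 -sqrf_eq0 eq_le sqr_ge0 andbT.
    by have := sqr_ge0 (c - 13/18); lra.
have cost2E : sqr_moment (2/3) ((c + 5/6) / 2) c + sqr_moment ((c + 5/6) / 2) (7/9) (5/6) =
    1/8748 + (13/18 - c) ^+ 2 * (1/3 - (13/18 - c)) / 4.
  by rewrite /sqr_moment; field.
have gap_gt0 : 0 < (13/18 - c) ^+ 2 * (1/3 - (13/18 - c)).
  by apply: mulr_gt0; [apply: exprn_gt0 | ]; lra.
exists (sqr_moment (2/3) ((c + 5/6) / 2) c + sqr_moment ((c + 5/6) / 2) (7/9) (5/6)); split.
- apply: sqr_moment2_le_itv_integral => //; try lra.
  + by move=> x /andP[x1 x2]; apply: g_ge_sqr; [apply/andP; split; lra | nearer ..].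
  + by move=> x /andP[x1 x2]; apply: g_ge_sqr; [apply/andP; split; lra | nearer ..].
- by rewrite cost2E; lra.
- by rewrite cost2E; lra.
Qed.

Lemma sharp_lower_bound_J3 (c : R) : 8/9 <= c <= 1 ->
  (forall x, 8/9 <= x <= 1 -> Num.min ((x - 5/6) ^+ 2) ((x - c) ^+ 2) <= g x) ->
  sharp_lower_bound (1/8748) (itv_integral (8/9) 1 g) (c = 17/18).
Proof.
move=> /andP[c_ge c_le] g_ge.
have g_ge_sqr d x : 8/9 <= x <= 1 -> (x - d) ^+ 2 <= (x - 5/6) ^+ 2 ->
    (x - d) ^+ 2 <= (x - c) ^+ 2 -> (x - d) ^+ 2 <= g x.
  by move=> Jx h1 h2; apply: le_trans (g_ge x Jx); rewrite le_min h1 h2.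
case: (lerP c (17/18)) => [c_le_mid|c_gt_mid].
  have cost1E : sqr_moment (8/9) 1 c = 1/8748 + (c - 17/18) ^+ 2 / 9.
    by rewrite /sqr_moment; field.
  exists (sqr_moment (8/9) 1 c); split.
  - apply: sqr_moment_le_itv_integral => //; first lra.
    by move=> x /andP[x1 x2]; apply: g_ge_sqr; [apply/andP; split; lra | nearer ..].
  - by rewrite cost1E; have := sqr_ge0 (c - 17/18); lra.
  - rewrite cost1E => cost_le; apply/eqP; rewrite -subr_eq0 -sqrf_eq0 eq_le sqr_ge0 andbT.
    by have := sqr_ge0 (c - 17/18); lra.
have cost2E : sqr_moment (8/9) ((5/6 + c) / 2) (5/6) + sqr_moment ((5/6 + c) / 2) 1 c =
    1/8748 + (c - 17/18) ^+ 2 * (1/3 - (c - 17/18)) / 4.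
  by rewrite /sqr_moment; field.
have gap_gt0 : 0 < (c - 17/18) ^+ 2 * (1/3 - (c - 17/18)).
  by apply: mulr_gt0; [apply: exprn_gt0 | ]; lra.
exists (sqr_moment (8/9) ((5/6 + c) / 2) (5/6) + sqr_moment ((5/6 + c) / 2) 1 c); split.
- apply: sqr_moment2_le_itv_integral => //; try lra.
  + by move=> x /andP[x1 x2]; apply: g_ge_sqr; [apply/andP; split; lra | nearer ..].
  + by move=> x /andP[x1 x2]; apply: g_ge_sqr; [apply/andP; split; lra | nearer ..].
- by rewrite cost2E; lra.
- by rewrite cost2E; lra.
Qed.

End IntervalCosts.

Section FourPointCosts.
Variable R : realType.

Lemma cost_J1_ge_of_half_lt_a1 (a1 a2 a3 a4 : R) : a1 < a2 -> a2 < a3 -> a3 < a4 -> 1/2 < a1 ->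
  ((13/324 : R)%:E <= itv_integral 0 (1/3) (min4 a1 a2 a3 a4))%E.
Proof.
move=> a12 a23 a34 a1_gt.
have -> : 13/324 = sqr_moment 0 (1/3) (1/2) :> R by rewrite /sqr_moment; field.
apply: sqr_moment_le_itv_integral_min4; try lra; move=> x /andP[x_ge x_le].
apply: (@min4_ge_gap_right _ _ _ _ _ (-1/2)); try lra.
by move=> a; rewrite !inE => /or4P[] /eqP->; right; lra.
Qed.

Lemma cost_J1_ge_of_half_lt_a2 (a1 a2 a3 a4 : R) : a1 < a2 -> a2 < a3 -> a3 < a4 -> 1/2 < a2 ->
  ((1/648 : R)%:E <= itv_integral 0 (1/3) (min4 a1 a2 a3 a4))%E.
Proof.
move=> a12 a23 a34 a2_gt; case: (lerP (1/6) a1) => a1_cmp.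
  have -> : 1/648 = sqr_moment 0 (1/6) (1/6) :> R by rewrite /sqr_moment; field.
  apply: sqr_moment_le_itv_integral_min4; try lra; move=> x /andP[x_ge x_le].
  apply: (@min4_ge_gap_right _ _ _ _ _ (-1/6)); try lra.
  by move=> a; rewrite !inE => /or4P[] /eqP->; right; lra.
have -> : 1/648 = sqr_moment (1/6) (1/3) (1/6) :> R by rewrite /sqr_moment; field.
apply: sqr_moment_le_itv_integral_min4; try lra; move=> x /andP[x_ge x_le].
apply: (@min4_ge_gap_left _ _ _ _ _ _ (1/2)); try lra.
by move=> a; rewrite !inE => /or4P[] /eqP->; [left | right | right | right]; lra.
Qed.

Lemma cost_J2_ge_of_gap (a1 a2 a3 a4 : R) : a1 < a2 -> a2 <= 1/2 ->
  a3 <= 1/2 \/ 5/6 <= a3 -> 5/6 <= a4 ->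
  ((13/8748 : R)%:E <= itv_integral (2/3) (7/9) (min4 a1 a2 a3 a4))%E.
Proof.
move=> a12 a2_le a3_out a4_ge.
have -> : 13/8748 = sqr_moment (2/3) (7/9) (5/6) :> R by rewrite /sqr_moment; field.
apply: sqr_moment_le_itv_integral_min4; try lra; move=> x /andP[x_ge x_le].
apply: (@min4_ge_gap_right _ _ _ _ _ (1/2)); try lra.
by move=> a; rewrite !inE => /or4P[] /eqP->; [left | left | | right]; lra.
Qed.

Lemma cost_J3_ge_of_a4_le (a1 a2 a3 a4 : R) : a1 < a2 -> a2 < a3 -> a3 < a4 -> a4 <= 5/6 ->
  ((13/8748 : R)%:E <= itv_integral (8/9) 1 (min4 a1 a2 a3 a4))%E.
Proof.
move=> a12 a23 a34 a4_le.
have -> : 13/8748 = sqr_moment (8/9) 1 (5/6) :> R by rewrite /sqr_moment; field.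
apply: sqr_moment_le_itv_integral_min4; try lra; move=> x /andP[x_ge x_le].
apply: (@min4_ge_gap_left _ _ _ _ _ _ (7/6)); try lra.
by move=> a; rewrite !inE => /or4P[] /eqP->; left; lra.
Qed.

Lemma min4_ge_J1 (a1 a2 a3 a4 x : R) : a3 < a4 -> 1/2 < a3 -> 0 <= x <= 1/3 ->
  Num.min (Num.min ((x - clamp 0 (1/3) a1) ^+ 2) ((x - clamp 0 (1/3) a2) ^+ 2)) ((x - 1/2) ^+ 2)
  <= min4 a1 a2 a3 a4 x.
Proof.
move=> a34 a3_gt Jx; have /andP[x_ge x_le] := Jx.
apply: le_min4; rewrite !ge_min.
- by rewrite clamp_sqr_sub_le.
- by rewrite clamp_sqr_sub_le ?orbT.
- by apply/orP; right; nearer.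
- by apply/orP; right; nearer.
Qed.

Lemma min4_ge_J2 (a1 a2 a3 a4 x : R) : a1 < a2 -> a2 <= 1/2 -> 5/6 < a4 -> 2/3 <= x <= 7/9 ->
  Num.min ((x - clamp (2/3) (7/9) a3) ^+ 2) ((x - 5/6) ^+ 2) <= min4 a1 a2 a3 a4 x.
Proof.
move=> a12 a2_le a4_gt Jx; have /andP[x_ge x_le] := Jx.
have /andP[c_ge c_le] : 2/3 <= clamp (2/3) (7/9) a3 <= 7/9 by apply: clamp_itv; lra.
apply: le_min4; rewrite !ge_min.
- by apply/orP; left; nearer.
- by apply/orP; left; nearer.
- by rewrite clamp_sqr_sub_le.
- by apply/orP; right; nearer.
Qed.

Lemma min4_ge_J3 (a1 a2 a3 a4 x : R) : a1 < a2 -> a2 < a3 -> a3 <= 5/6 -> 8/9 <= x <= 1 ->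
  Num.min ((x - 5/6) ^+ 2) ((x - clamp (8/9) 1 a4) ^+ 2) <= min4 a1 a2 a3 a4 x.
Proof.
move=> a12 a23 a3_le Jx; have /andP[x_ge x_le] := Jx.
apply: le_min4; rewrite !ge_min.
- by apply/orP; left; nearer.
- by apply/orP; left; nearer.
- by apply/orP; left; nearer.
- by rewrite clamp_sqr_sub_le ?orbT.
Qed.

Lemma distortion_fset4_sharp_main (a1 a2 a3 a4 : R) :
  a1 < a2 -> a2 <= 1/2 -> 1/2 < a3 -> a3 < 5/6 -> 5/6 < a4 ->
  sharp_lower_bound (13/7776) (distortion [fset a1; a2; a3; a4]%fset)
    [/\ a1 = 1/12, a2 = 1/4, a3 = 13/18 & a4 = 17/18].
Proof.
move=> a12 a2_le a3_gt a3_lt a4_gt.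
have mg := measurable_min4 a1 a2 a3 a4; have g_ge0 := min4_ge0 a1 a2 a3 a4.
have k1 : (0 : R) <= 1/3 by lra.
have k2 : (2/3 : R) <= 7/9 by lra.
have k3 : (8/9 : R) <= 1 by lra.
have /andP[c1_ge _] := clamp_itv a1 k1.
have /andP[_ c2_le] := clamp_itv a2 k1.
have J1 := sharp_lower_bound_J1 mg g_ge0 c1_ge (le_clamp k1 (ltW a12)) c2_le
  (fun x => @min4_ge_J1 a1 a2 a3 a4 x (lt_trans a3_lt a4_gt) a3_gt).
have J2 := sharp_lower_bound_J2 mg g_ge0 (clamp_itv a3 k2)
  (fun x => @min4_ge_J2 a1 a2 a3 a4 x a12 a2_le a4_gt).
have J3 := sharp_lower_bound_J3 mg g_ge0 (clamp_itv a4 k3)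
  (fun x => @min4_ge_J3 a1 a2 a3 a4 x a12 (le_lt_trans a2_le a3_gt) (ltW a3_lt)).
rewrite distortion_fset4 (_ : 13/7776 = 3/2 * (1/1296) + 9/4 * (1/8748) + 9/4 * (1/8748)); last lra.
apply: (sharp_lower_boundW _ (sharp_lower_bound_pcomb3 _ _ _ J1 J2 J3)); try lra.
move=> [[/clamp_eq_interior e1 /clamp_eq_interior e2] /clamp_eq_interior e3].
move=> /clamp_eq_interior e4.
by split; [apply: e1 | apply: e2 | apply: e3 | apply: e4]; lra.
Qed.

Lemma distortion_fset4_sharp (a1 a2 a3 a4 : R) : a1 < a2 -> a2 < a3 -> a3 < a4 ->
  sharp_lower_bound (13/7776) (distortion [fset a1; a2; a3; a4]%fset)
    [/\ a1 = 1/12, a2 = 1/4, a3 = 13/18 & a4 = 17/18].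
Proof.
move=> a12 a23 a34.
have I_ge0 u v := itv_integral_ge0 (min4_ge0 a1 a2 a3 a4) u v.
have too_costly c1 c2 c3 : 13/7776 < 3/2 * c1 + 9/4 * c2 + 9/4 * c3 ->
    (c1%:E <= itv_integral 0 (1/3) (min4 a1 a2 a3 a4))%E ->
    (c2%:E <= itv_integral (2/3) (7/9) (min4 a1 a2 a3 a4))%E ->
    (c3%:E <= itv_integral (8/9) 1 (min4 a1 a2 a3 a4))%E ->
    sharp_lower_bound (13/7776) (distortion [fset a1; a2; a3; a4]%fset)
      [/\ a1 = 1/12, a2 = 1/4, a3 = 13/18 & a4 = 17/18].
  move=> lt_c c1_le c2_le c3_le; rewrite distortion_fset4.
  apply: sharp_lower_bound_gt lt_c _.
  by rewrite !EFinD !EFinM; apply: lee_pcomb3 => //; lra.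
case: (lerP a4 (5/6)) => [a4_le|a4_gt].
  apply: (too_costly 0 0 (13/8748)); [lra | exact: I_ge0 | exact: I_ge0 |].
  exact: cost_J3_ge_of_a4_le.
case: (lerP a1 (1/2)) => [a1_le|a1_gt]; last first.
  apply: (too_costly (13/324) 0 0); [lra | | exact: I_ge0 | exact: I_ge0].
  exact: cost_J1_ge_of_half_lt_a1.
case: (lerP a2 (1/2)) => [a2_le|a2_gt]; last first.
  apply: (too_costly (1/648) 0 0); [lra | | exact: I_ge0 | exact: I_ge0].
  exact: cost_J1_ge_of_half_lt_a2.
have [/andP[a3_gt a3_lt]|a3_out] : 1/2 < a3 < 5/6 \/ a3 <= 1/2 \/ 5/6 <= a3.
  case: (lerP a3 (1/2)) => ?; first by right; left.
  by case: (ltrP a3 (5/6)) => ?; [left | right; right].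
- exact: distortion_fset4_sharp_main.
- apply: (too_costly 0 (13/8748) 0); [lra | exact: I_ge0 | | exact: I_ge0].
  by apply: cost_J2_ge_of_gap => //; exact: ltW.
Qed.

End FourPointCosts.

Section Optimum.
Variable R : realType.

Lemma distortion_fset4_optimum_le :
  (distortion [fset (1/12 : R)%R; (1/4)%R; (13/18)%R; (17/18)%R]%fset
   <= (13/7776 : R)%:E)%E.
Proof.
set g := min4 (1/12 : R) (1/4) (13/18) (17/18).
have mg : measurable_fun setT g by exact: measurable_min4.
have g_ge0 : forall x, 0 <= g x by exact: min4_ge0.
have I1 : (itv_integral 0 (1/3) g <= (1/1296 : R)%:E)%E.
  have [u0 u1] : (0 : R) <= 1/6 /\ (1/6 : R) <= 1/3 by split; lra.
  rewrite (itv_integral_split mg g_ge0 u0 u1).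
  have -> : 1/1296 = sqr_moment 0 (1/6) (1/12) + sqr_moment (1/6) (1/3) (1/4) :> R.
    by rewrite /sqr_moment; field.
  rewrite EFinD; apply: leeD; apply: itv_integral_le_sqr_moment => // x _;
    by rewrite /g /min4 !ge_min lexx ?orbT.
have I2 : (itv_integral (2/3) (7/9) g <= (1/8748 : R)%:E)%E.
  have -> : 1/8748 = sqr_moment (2/3) (7/9) (13/18) :> R by rewrite /sqr_moment; field.
  apply: itv_integral_le_sqr_moment => //; first lra.
  by move=> x _; rewrite /g /min4 !ge_min lexx ?orbT.
have I3 : (itv_integral (8/9) 1 g <= (1/8748 : R)%:E)%E.
  have -> : 1/8748 = sqr_moment (8/9) 1 (17/18) :> R by rewrite /sqr_moment; field.
  apply: itv_integral_le_sqr_moment => //; first lra.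
  by move=> x _; rewrite /g /min4 !ge_min lexx ?orbT.
rewrite distortion_fset4 -/g.
rewrite (_ : 13/7776 = 3/2 * (1/1296) + 9/4 * (1/8748) + 9/4 * (1/8748)); last lra.
by rewrite !EFinD !EFinM; apply: lee_pcomb3 => //; lra.
Qed.

End Optimum.

Lemma quant_err_le_distortion (R : realType) (n : nat) (alpha : {fset R}) :
  (#|` alpha| <= n)%N -> (quant_err R n <= distortion alpha)%E.
Proof. by move=> card_le; apply: ereal_inf_lbound; exists alpha. Qed.

Lemma cardfs4_le (T : choiceType) (a b c d : T) : (#|` [fset a; b; c; d]%fset| <= 4)%N.
Proof. by rewrite !cardfsU !cardfs1; lia. Qed.

Local Open Scope fset_scope.

Theorem lemma5p6 (R : realType) (a1 a2 a3 a4 : R) :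
  a1 < a2 -> a2 < a3 -> a3 < a4 ->
  optimal_set 4 [fset a1; a2; a3; a4] ->
  [/\ a1 = 1 / 12, a2 = 1 / 4, a3 = 13 / 18, a4 = 17 / 18
    & quant_err R 4 = (13 / 7776 : R)%:E].
Proof.
move=> a12 a23 a34 [_ opt].
have V_le : (quant_err R 4 <= (13/7776 : R)%:E)%E.
  apply: le_trans (distortion_fset4_optimum_le R).
  exact/quant_err_le_distortion/cardfs4_le.
have [F [F_le ge_F F_eq]] := distortion_fset4_sharp a12 a23 a34.
rewrite opt in F_le.
have F_le' : F <= 13/7776 by rewrite -lee_fin; exact: le_trans F_le V_le.
have [-> -> -> ->] := F_eq F_le'.
split => //; apply/le_anti; rewrite V_le /=.
by apply: le_trans F_le; rewrite lee_fin.
Qed.
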